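(* Let $\mathcal C$ be an SCW code with $M\ge2$ codewords of length $K$ over the symbol set $\mathcal S$, used with equiprobable codewords over the Poisson channel with fixed CSI $(\bar c_{\mathrm s},\bar c_{\mathrm n})\in(0,\infty)^2$, and let $P_e^{\mathrm{code}}$ be the codeword error rate of the optimal (coherent ML) detector. Then for every $t>0$, $$P_e^{\mathrm{code}}\le\frac1M\sum_{\mathbf s\in\mathcal C}\ \sum_{\hat{\mathbf s}\in\mathcal C,\,\hat{\mathbf s}\ne\mathbf s}\exp\!\left(\sum_{k=1}^K\lambda[k]\left(e^{\varpi[k]t}-1\right)\right),$$ where $\lambda[k]=s[k]\bar c_{\mathrm s}+\bar c_{\mathrm n}$ and $\varpi[k]=\ln\!\left(\frac{1+\hat s[k]\,\mathsf{SNR}}{1+s[k]\,\mathsf{SNR}}\right)$ with $\mathsf{SNR}=\bar c_{\mathrm s}/\bar c_{\mathrm n}$.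
   Context: Symbol set $\mathcal S=\{\eta_0,\dots,\eta_{L-1}\}$ with $0=\eta_0<\dots<\eta_{L-1}=1$. An SCW code with weight vector $\bar{\boldsymbol\omega}$ is a codebook $\mathcal C\subseteq\mathcal S^K$ ($K=\sum_\ell\bar\omega_\ell$) in which every codeword has exactly $\bar\omega_\ell$ entries equal to $\eta_\ell$ for each $\ell$. Channel: given transmitted codeword $\mathbf s$, the observations $r[1],\dots,r[K]$ are independent with $r[k]$ Poisson of mean $s[k]\bar c_{\mathrm s}+\bar c_{\mathrm n}$. The optimal detector outputs a codeword maximizing the likelihood $\prod_{k}\frac{(\bar c_{\mathrm s}s[k]+\bar c_{\mathrm n})^{r[k]}e^{-\bar c_{\mathrm s}s[k]-\bar c_{\mathrm n}}}{r[k]!}$ over $\mathcal C$, ties broken uniformly at random among maximizers. The transmitted codeword is uniform on $\mathcal C$, and $P_e^{\mathrm{code}}$ is the probability that the detected codeword differs from the transmitted one. *)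

From HB Require Import structures.
From mathcomp Require Import all_boot all_order all_algebra.
From mathcomp Require Import all_classical all_reals all_analysis.
Set Implicit Arguments. Unset Strict Implicit. Unset Printing Implicit Defensive.
Import Order.TTheory GRing.Theory Num.Theory.
Local Open Scope ring_scope.
Local Open Scope classical_set_scope.

Section SCW.
Variables (R : realType) (L K : nat) (eta : 'I_L -> R).

(* A codeword of S^K is represented by the indices of its symbols:
   c : {ffun 'I_K -> 'I_L} stands for the word k |-> eta (c k). *)
Definition word := {ffun 'I_K -> 'I_L}.
Definition obs := {ffun 'I_K -> nat}.

Definition sym (c : word) (k : 'I_K) : R := eta (c k).

Definition is_SCW (omega : 'I_L -> nat) (C : {set word}) : Prop :=
  K = (\sum_(l < L) omega l)%N /\
  forall c, c \in C -> forall l : 'I_L, #|[set k | c k == l]| = omega l.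

Definition lik (cs cn : R) (c : word) (r : obs) : R :=
  \prod_(k < K) ((cs * sym c k + cn) ^+ r k * expR (- (cs * sym c k + cn))
                   / (r k)`!%:R).

Definition mlset (cs cn : R) (C : {set word}) (r : obs) : {set word} :=
  [set c in C | [forall c' in C, lik cs cn c' r <= lik cs cn c r]].

Definition pdetect (cs cn : R) (C : {set word}) (r : obs) (c : word) : R :=
  if c \in mlset cs cn C r then (#|mlset cs cn C r|%:R)^-1 else 0.

Definition Pe_code (cs cn : R) (C : {set word}) : \bar R :=
  ((#|C|%:R)^-1)%:E *
  (\sum_(s in C) \esum_(r in [set: obs])
      (lik cs cn s r * (1 - pdetect cs cn C r s))%:E)%E.

Definition chernoff_bound (cs cn t : R) (C : {set word}) : R :=
  let SNR := cs / cn in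
  (#|C|%:R)^-1 *
  \sum_(s in C) \sum_(sh in C | sh != s)
    expR (\sum_(k < K) (sym s k * cs + cn) *
           (expR (ln ((1 + sym sh k * SNR) / (1 + sym s k * SNR)) * t) - 1)).

End SCW.

From Pilot Require Import Defs.
From HB Require Import structures.
From mathcomp Require Import all_boot all_order all_algebra.
From mathcomp Require Import all_classical all_reals all_analysis.
From mathcomp Require Import ring.
Import Order.TTheory GRing.Theory Num.Theory.
Local Open Scope ring_scope.

(* Union bound plus Chernoff.  If the ML detector errs on s, some competitor sh
   has lik sh r >= lik s r, hence (lik sh r / lik s r)^t >= 1 for t > 0.  All
   codewords of an SCW code have the same symbol sum, so the factors
   exp(-lambda[k]) cancel and that power is prod_k (lambda_hat[k] / lambda[k])^(t r[k]).
   Weighted by lik s r and summed over all observations, each such term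
   factorises over k into Poisson generating functions E[x^N] = exp(lambda (x - 1)). *)

Lemma partial_exp_series_le_expR (R : realType) (y : R) (n : nat) : 0 <= y ->
  \sum_(j < n) y ^+ j / j`!%:R <= expR y.
Proof.
move=> y_ge0.
have := @nondecreasing_cvgn_le R (series (exp_coeff y)) _
  (is_cvg_series_exp_coeff y) n.
rewrite /series /= big_mkord; apply.
apply: (@nondecreasing_series R (exp_coeff y) predT 0) => k _ _.
exact: exp_coeff_ge0.
Qed.

Lemma poisson_pgf_partial_le (R : realType) (a x : R) (n : nat) :
  0 <= a -> 0 <= x ->
  \sum_(j < n) a ^+ j * expR (- a) / j`!%:R * x ^+ j <= expR (a * (x - 1)).
Proof.
move=> a_ge0 x_ge0.
have -> : \sum_(j < n) a ^+ j * expR (- a) / j`!%:R * x ^+ j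
        = expR (- a) * \sum_(j < n) (a * x) ^+ j / j`!%:R.
  by rewrite mulr_sumr; apply: eq_bigr => j _; rewrite exprMn; ring.
rewrite mulrBr mulr1 addrC expRD ler_wpM2l ?expR_ge0 //.
by apply: partial_exp_series_le_expR; rewrite mulr_ge0.
Qed.

Section ProductOfSeries.
Variables (R : realType) (K : nat) (F : 'I_K -> nat -> R) (B : 'I_K -> R).
Hypothesis F_ge0 : forall k j, 0 <= F k j.
Hypothesis partial_sum_le : forall k n, \sum_(j < n) F k j <= B k.

(* A finite set of index functions fits in the box [0, N]^K, on which the sum
   of products is a product of partial sums. *)
Lemma sum_prod_le_prod_ub (s : seq {ffun 'I_K -> nat}) : uniq s ->
  \sum_(r <- s) \prod_k F k (r k) <= \prod_k B k.
Proof.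
move=> s_uniq.
set N := (\max_(r <- s) \max_(k < K) r k)%N.
have r_lt : forall r, r \in s -> forall k, (r k < N.+1)%N.
  move=> r rs k; rewrite ltnS.
  apply: leq_trans (@leq_bigmax_seq _ s xpredT (fun r : {ffun 'I_K -> nat} =>
                                      \max_(k < K) r k)%N r rs erefl).
  exact: (@leq_bigmax _ (fun k => r k) k).
pose box (r : {ffun 'I_K -> nat}) : {ffun 'I_K -> 'I_N.+1} :=
  [ffun k => inord (r k)].
pose unbox (f : {ffun 'I_K -> 'I_N.+1}) : {ffun 'I_K -> nat} :=
  [ffun k => val (f k)].
have boxK : {in s, cancel box unbox}.
  by move=> r rs; apply/ffunP => k; rewrite !ffunE /= inordK ?r_lt.
have -> : s = map unbox (map box s) by rewrite -map_comp map_id_in.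
rewrite big_map big_uniq /=; last by rewrite (map_inj_in_uniq (can_in_inj boxK)).
apply: (@le_trans _ _ (\sum_(f : {ffun 'I_K -> 'I_N.+1})
                         \prod_k F k (unbox f k))).
  by rewrite [X in _ <= X](bigID (mem (map box s))) /= lerDl sumr_ge0 // => f _; apply: prodr_ge0.
rewrite (eq_bigr (fun f : {ffun 'I_K -> 'I_N.+1} => \prod_k F k (f k))); last first.
  by move=> f _; apply: eq_bigr => k _; rewrite ffunE.
rewrite -(bigA_distr_bigA (fun k (j : 'I_N.+1) => F k j)) /=; apply: ler_prod => k _.
by rewrite sumr_ge0 //= partial_sum_le.
Qed.

Lemma esum_prod_le_prod_ub :
  (\esum_(r in [set: {ffun 'I_K -> nat}]) (\prod_k F k (r k))%:E
    <= (\prod_k B k)%:E)%E.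
Proof.
apply: ge_ereal_sup => _ [X [X_fin _]] <-.
rewrite fsbig_finite //= sumEFin lee_fin.
exact/sum_prod_le_prod_ub/finmap.fset_uniq.
Qed.

End ProductOfSeries.

Lemma SCW_sum_sym {R : realType} {L K : nat} (eta : 'I_L -> R)
    {omega : 'I_L -> nat} {C : {set word L K}} {c : word L K} :
  is_SCW omega C -> c \in C ->
  \sum_k sym eta c k = \sum_l (omega l)%:R * eta l.
Proof.
move=> [_ C_weights] cC.
have sym_split k : sym eta c k = \sum_l (if c k == l then eta l else 0).
  by rewrite -big_mkcond (big_pred1 (c k)) // => l; rewrite eq_sym.
rewrite (eq_bigr _ (fun k _ => sym_split k)) exchange_big /=.
apply: eq_bigr => l _; rewrite -big_mkcond sumr_const -(C_weights c cC l).
rewrite mulr_natl; congr (_ *+ _); apply: eq_card => k.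
by apply/idP/idP => [h|/set_mem h]; [exact: mem_set h | exact: h].
Qed.

Section MLDetector.
Variables (R : realType) (L K : nat) (eta : 'I_L -> R) (cs cn : R).
Variable C : {set word L K}.

Local Notation lik := (@Defs.lik _ _ K eta cs cn).
Local Notation pdetect := (@Defs.pdetect _ _ K eta cs cn C).

Lemma pdetect_ge0 r s : 0 <= pdetect r s.
Proof. by rewrite /Defs.pdetect; case: ifP => // _; rewrite invr_ge0 ler0n. Qed.

Lemma pdetect_unique_max r s : s \in C ->
  (forall c, c \in C -> c != s -> lik c r < lik s r) -> pdetect r s = 1.
Proof.
move=> sC s_max; rewrite /Defs.pdetect.
have -> : mlset eta cs cn C r = [set s].
  apply/setP => c; rewrite !inE; apply/andP/eqP => [[cC /forall_inP c_max]|->].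
    apply: contraTeq (c_max s sC) => c_neq_s.
    by rewrite -ltNge s_max.
  split=> //; apply/forall_inP => c' c'C.
  by have [->|c'_neq_s] := eqVneq c' s; last exact/ltW/s_max.
by rewrite inE eqxx cards1 invr1.
Qed.

Lemma ml_error_le_sum r s (w : word L K -> R) : s \in C ->
  (forall sh, sh \in C -> sh != s -> 0 <= w sh) ->
  (forall sh, sh \in C -> sh != s -> lik s r <= lik sh r -> 1 <= w sh) ->
  1 - pdetect r s <= \sum_(sh in C | sh != s) w sh.
Proof.
move=> sC w_ge0 w_ge1.
have sum_ge0 : 0 <= \sum_(sh in C | sh != s) w sh.
  by apply: sumr_ge0 => sh /andP[shC sh_neq_s]; exact: w_ge0.
have [[sh /and3P[shC sh_neq_s lik_le]]|no_rival] :=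
  pselect (exists sh, [&& sh \in C, sh != s & lik s r <= lik sh r]).
  rewrite (bigD1 sh) /=; last by rewrite shC.
  have err_le1 : 1 - pdetect r s <= 1 by rewrite lerBlDr lerDl pdetect_ge0.
  apply: le_trans err_le1 (le_trans (w_ge1 _ shC sh_neq_s lik_le) _).
  by rewrite lerDl sumr_ge0 // => c /andP[/andP[cC c_neq_s] _]; exact: w_ge0.
rewrite pdetect_unique_max ?subrr // => c cC c_neq_s.
by rewrite ltNge; apply/negP => lik_le; apply: no_rival; exists c; rewrite cC c_neq_s.
Qed.

End MLDetector.

Section PoissonLikelihood.
Variables (R : realType) (L K : nat) (eta : 'I_L -> R) (cs cn : R).
Hypothesis eta_ge0 : forall l, 0 <= eta l.
Hypothesis cs_gt0 : 0 < cs.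
Hypothesis cn_gt0 : 0 < cn.

Local Notation lik := (@Defs.lik _ _ K eta cs cn).
Local Notation pdetect := (@Defs.pdetect _ _ K eta cs cn).

Definition lam (c : word L K) (k : 'I_K) : R := sym eta c k * cs + cn.

Lemma likE c r :
  lik c r = \prod_k (lam c k ^+ r k * expR (- lam c k) / (r k)`!%:R).
Proof. by rewrite /Defs.lik; apply: eq_bigr => k _; rewrite /lam [cs * _]mulrC. Qed.

Lemma sym_ge0 (c : word L K) k : 0 <= sym eta c k.
Proof. exact: eta_ge0. Qed.

Lemma lam_gt0 c k : 0 < lam c k.
Proof. by rewrite ltr_wpDl // mulr_ge0 ?sym_ge0 ?ltW. Qed.

Lemma lik_gt0 c r : 0 < lik c r.
Proof.
rewrite likE; apply: prodr_gt0 => k _.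
by rewrite divr_gt0 ?ltr0n ?fact_gt0 // mulr_gt0 ?expR_gt0 // exprn_gt0 ?lam_gt0.
Qed.

Lemma lik_eq_sum_sym c c' r :
  \sum_k sym eta c k = \sum_k sym eta c' k ->
  lik c' r = lik c r * \prod_k (lam c' k / lam c k) ^+ r k.
Proof.
move=> sum_eq.
have lam_sum_eq : \sum_k lam c k = \sum_k lam c' k.
  by rewrite !big_split /= -!mulr_suml sum_eq.
have factor k : lam c' k ^+ r k * expR (- lam c' k) / (r k)`!%:R
    = lam c k ^+ r k * expR (- lam c k) / (r k)`!%:R
      * (lam c' k / lam c k) ^+ r k * expR (lam c k - lam c' k).
  have lamk_neq0 : lam c k ^+ r k != 0 by rewrite expf_neq0 // gt_eqF ?lam_gt0.
  have -> : expR (- lam c' k) = expR (- lam c k) * expR (lam c k - lam c' k).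
    by rewrite -expRD addrA addNr add0r.
  rewrite expr_div_n; field; by rewrite lamk_neq0 pnatr_eq0 -lt0n fact_gt0.
rewrite !likE (eq_bigr _ (fun k _ => factor k)) !big_split /=.
by rewrite -[\prod_k expR (_ - _)]expR_sum sumrB lam_sum_eq subrr expR0 mulr1.
Qed.

Definition chernoff_factor (s sh : word L K) (t : R) (k : 'I_K) : R :=
  expR (ln ((1 + sym eta sh k * (cs / cn)) / (1 + sym eta s k * (cs / cn))) * t).

Lemma snr_ratio_lam s sh k :
  (1 + sym eta sh k * (cs / cn)) / (1 + sym eta s k * (cs / cn))
  = lam sh k / lam s k.
Proof.
have lam_neq0 : lam s k != 0 by rewrite gt_eqF ?lam_gt0.
rewrite /lam in lam_neq0 *; field.
by rewrite lam_neq0 gt_eqF.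
Qed.

Lemma prod_chernoff_factor s sh t (r : obs K) :
  \sum_k sym eta s k = \sum_k sym eta sh k ->
  \prod_k chernoff_factor s sh t k ^+ r k
  = expR (t * ln (lik sh r / lik s r)).
Proof.
move=> sum_eq.
have rho_gt0 k : 0 < lam sh k / lam s k by rewrite divr_gt0 ?lam_gt0.
have -> : lik sh r / lik s r
    = expR (\sum_k ln (lam sh k / lam s k) * (r k)%:R).
  rewrite (lik_eq_sum_sym _ _ r sum_eq) mulrC mulKf ?gt_eqF ?lik_gt0 //.
  by rewrite expR_sum; apply: eq_bigr => k _; rewrite expRM_natr lnK ?posrE.
rewrite expRK mulr_sumr expR_sum; apply: eq_bigr => k _.
by rewrite /chernoff_factor snr_ratio_lam -expRM_natr mulrCA mulrA.
Qed.

Lemma prod_chernoff_factor_ge1 s sh t (r : obs K) : 0 < t ->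
  \sum_k sym eta s k = \sum_k sym eta sh k ->
  lik s r <= lik sh r -> 1 <= \prod_k chernoff_factor s sh t k ^+ r k.
Proof.
move=> t_gt0 sum_eq lik_le; rewrite prod_chernoff_factor // -expR0 ler_expR.
apply: mulr_ge0; first exact: ltW.
by apply: ln_ge0; rewrite ler_pdivlMr ?lik_gt0 // mul1r.
Qed.

Lemma esum_lik_chernoff s sh t :
  (\esum_(r in [set: obs K]) (lik s r * \prod_k chernoff_factor s sh t k ^+ r k)%:E
   <= (expR (\sum_k (sym eta s k * cs + cn) * (chernoff_factor s sh t k - 1)))%:E)%E.
Proof.
pose F k j := lam s k ^+ j * expR (- lam s k) / j`!%:R * chernoff_factor s sh t k ^+ j.
have F_ge0 k j : 0 <= F k j.
  by rewrite !mulr_ge0 ?invr_ge0 ?exprn_ge0 ?expR_ge0 ?ltW ?lam_gt0.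
rewrite (eq_esum (b := fun r : obs K => (\prod_k F k (r k))%:E)); last first.
  by move=> r _; rewrite likE -big_split.
have partial_sum_le k n :
    \sum_(j < n) F k j <= expR (lam s k * (chernoff_factor s sh t k - 1)).
  by apply: poisson_pgf_partial_le; rewrite ?expR_ge0 ?ltW ?lam_gt0.
apply: le_trans (@esum_prod_le_prod_ub _ _ _ _ F_ge0 partial_sum_le) _.
by rewrite -expR_sum.
Qed.

Lemma esum_error_le_chernoff (C : {set word L K}) s t : 0 < t -> s \in C ->
  (forall sh, sh \in C -> \sum_k sym eta s k = \sum_k sym eta sh k) ->
  (\esum_(r in [set: obs K]) (lik s r * (1 - pdetect C r s))%:E
   <= (\sum_(sh in C | sh != s)
        expR (\sum_k (sym eta s k * cs + cn) * (chernoff_factor s sh t k - 1)))%:E)%E.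
Proof.
move=> t_gt0 sC sum_eq.
have prod_ge0 sh (r : obs K) : 0 <= \prod_k chernoff_factor s sh t k ^+ r k.
  by apply: prodr_ge0 => k _; rewrite exprn_ge0 ?expR_ge0.
apply: le_trans (le_esum (b := fun r => \sum_(sh in C | sh != s)
    (lik s r * \prod_k chernoff_factor s sh t k ^+ r k)%:E) _) _.
  move=> r _; rewrite sumEFin lee_fin -mulr_sumr.
  apply: ler_wpM2l; first exact/ltW/lik_gt0.
  apply: ml_error_le_sum => // sh shC _.
  exact: prod_chernoff_factor_ge1 (sum_eq sh shC).
rewrite esum_sum => [|r sh _ _]; last by rewrite lee_fin mulr_ge0 ?prod_ge0 ?ltW ?lik_gt0.
by rewrite -sumEFin; apply: lee_sum => sh _; exact: esum_lik_chernoff.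
Qed.

End PoissonLikelihood.

Theorem proposition2 (R : realType) (L : nat) (eta : 'I_L -> R)
  (hL : (2 <= L)%N)
  (eta_incr : forall i j : 'I_L, (i < j)%N -> eta i < eta j)
  (eta_first : forall i : 'I_L, val i = 0%N -> eta i = 0)
  (eta_last : forall i : 'I_L, val i = L.-1 -> eta i = 1)
  (K : nat) (omega : 'I_L -> nat) (C : {set word L K})
  (hC : is_SCW omega C) (hM : (2 <= #|C|)%N)
  (cs cn : R) (hcs : 0 < cs) (hcn : 0 < cn) (t : R) (ht : 0 < t) :
  (Pe_code eta cs cn C <= (chernoff_bound eta cs cn t C)%:E)%E.
Proof.
have eta_ge0 i : 0 <= eta i.
  have [i0|i_gt0] := posnP (val i); first by rewrite eta_first.
  rewrite -(eta_first (Ordinal (ltn_trans i_gt0 (ltn_ord i))) erefl).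
  exact/ltW/eta_incr.
have sum_eq s sh : s \in C -> sh \in C ->
    \sum_k sym eta s k = \sum_k sym eta sh k.
  by move=> sC shC; rewrite (SCW_sum_sym eta hC sC) (SCW_sum_sym eta hC shC).
rewrite /Pe_code /chernoff_bound EFinM lee_wpmul2l ?lee_fin ?invr_ge0 ?ler0n //.
rewrite -sumEFin; apply: lee_sum => s sC.
apply: (@esum_error_le_chernoff _ _ _ eta cs cn eta_ge0 hcs hcn C s t ht sC).
by move=> sh; apply: sum_eq.
Qed.
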